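(* In the PIR-PSI under a storage constraint problem described in the context, fix $N$, $K$, the cache size $S$ and the number of accessed messages $M$ with $S\le M\le K$. Among all caching schemes $(r_1,\dots,r_M)\in[0,1]^M$ with $\sum_{i=1}^M r_i=S$, the uniform caching scheme $r_1=\dots=r_M=S/M$ achieves the lowest optimal normalized download cost $D^*$.
   Context: Model: $N$ non-communicating databases each store the same $K$ independent messages $W_1,\dots,W_K$ of $L$ symbols each. The user has a cache of $SL$ symbols. It accesses a random set $\mathbb{H}$ of $M$ messages ($S\le M\le K$) and caches the first $Lr_i$ symbols of the $i$-th accessed message, $\sum_i r_i=S$; the databases know $M$ and $(r_1,\dots,r_M)$ but not $\mathbb{H}$. The user wants message $W_\theta$ and sends queries (independent of the messages) to the databases, each of which answers with a deterministic function of its query and the messages; the user must decode $W_\theta$ from the answers, queries and cached content with error entropy $o(L)$, and for each database the joint distribution of (its query, its answer, all messages) must not depend on $(\theta,\mathbb{H})$ (over all $\theta\in[K]$ and all $M$-subsets $\mathbb{H}$). The download is $D=\sum_n H(A_n)$ and $D^*=\inf D/L$ over achievable schemes. For a caching scheme $(r_1,\dots,r_M)$ ordered so that $r_1\ge\dots\ge r_M$, one has $D^*=1+\frac1N+\dots+\frac1{N^{K-1-M}}+\frac{1-r_M}{N^{K-M}}+\frac{1-r_{M-1}}{N^{K-M+1}}+\dots+\frac{1-r_1}{N^{K-1}}$. *)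

From mathcomp Require Import all_boot all_order all_algebra.
Set Implicit Arguments. Unset Strict Implicit. Unset Printing Implicit Defensive.
Import Order.TTheory GRing.Theory Num.Theory.
Local Open Scope ring_scope.

(* Optimal normalized download cost D^* of PIR-PSI under a storage constraint
   for the caching scheme r = (r_1,...,r_M), given by the closed form of the
   context: sort r decreasingly (s_0 >= ... >= s_{M-1}, s_{i} = r_{(i+1)}), then
   D^* = sum_{j=0}^{K-M-1} 1/N^j + sum_{i=0}^{M-1} (1 - s_i)/N^{K-1-i}. *)
Definition Dstar (R : realFieldType) (N K M : nat) (r : 'I_M -> R) : R :=
  let s := sort (fun x y : R => y <= x) [seq r i | i <- enum 'I_M] in
  \sum_(j < K - M) (N%:R ^+ j)^-1
  + \sum_(i < M) (1 - nth 0 s i) / N%:R ^+ (K - 1 - i).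

(* With weights [w_i = 1 / N^(K-1-i)], the closed form reads
   [D^* = C + sum_i w_i - sum_i s_i w_i], where [C] depends only on [N, K, M]
   and [s] is the decreasing rearrangement of [r].  The weights increase with
   [i] while [s] decreases, so Chebyshev's sum inequality gives
   [M * sum_i s_i w_i <= (sum_i s_i) (sum_i w_i) = S * sum_i w_i], and the
   right-hand side is [M] times the weighted sum of the uniform scheme. *)

From mathcomp Require Import all_boot all_order all_algebra.
From mathcomp Require Import ring.

Set Implicit Arguments.
Unset Strict Implicit.
Unset Printing Implicit Defensive.
Import Order.TTheory GRing.Theory Num.Theory.
Local Open Scope ring_scope.

Section Chebyshev.

Variables (R : realFieldType) (I : finType) (f g : I -> R).

Lemma sumr_pair_diffM :
  \sum_i \sum_j (f i - f j) * (g i - g j) =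
  (#|I|%:R * \sum_i f i * g i - (\sum_i f i) * (\sum_i g i)) *+ 2.
Proof.
have diag : \sum_i \sum_j (f i * g i + f j * g j) = (#|I|%:R * \sum_i f i * g i) *+ 2.
  under eq_bigr do rewrite big_split /= sumr_const.
  by rewrite big_split /= sumr_const sumrMnl mulr_natl mulr2n.
have cross : \sum_i \sum_j (f i * g j + f j * g i) = ((\sum_i f i) * (\sum_i g i)) *+ 2.
  under eq_bigr do rewrite big_split /= -mulr_sumr -mulr_suml.
  by rewrite big_split /= -mulr_suml -mulr_sumr mulr2n.
rewrite mulrnBl -diag -cross -sumrB; apply: eq_bigr => i _.
by rewrite -sumrB; apply: eq_bigr => j _; ring.
Qed.

Lemma chebyshev_sum_le :
  (forall i j, (f i - f j) * (g i - g j) <= 0) ->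
  #|I|%:R * \sum_i f i * g i <= (\sum_i f i) * (\sum_i g i).
Proof.
move=> opposite.
have : \sum_i \sum_j (f i - f j) * (g i - g j) <= 0.
  by do 2![apply: sumr_le0 => ? _]; apply: opposite.
by rewrite sumr_pair_diffM pmulrn_lle0 // subr_le0.
Qed.

End Chebyshev.

Section DecreasingRearrangement.

Variable R : realFieldType.

Definition sort_desc (s : seq R) : seq R := sort (fun x y : R => y <= x) s.

Lemma size_sort_desc (s : seq R) : size (sort_desc s) = size s.
Proof. exact: size_sort. Qed.

Lemma nth_sort_desc_nonincr (s : seq R) (i j : nat) :
  (i <= j < size s)%N -> nth 0 (sort_desc s) j <= nth 0 (sort_desc s) i.
Proof.
case/andP=> le_ij lt_js.
have sorted_s : sorted (fun x y : R => y <= x) (sort_desc s).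
  by apply: sort_sorted => x y; exact: le_total.
apply: (sorted_leq_nth (rev_trans le_trans) lexx 0 sorted_s) => //;
  rewrite inE size_sort_desc //; exact: leq_ltn_trans lt_js.
Qed.

Lemma sum_sort_desc (s : seq R) :
  \sum_(i < size s) nth 0 (sort_desc s) i = \sum_(x <- s) x.
Proof.
rewrite -(perm_big _ (permEl (perm_sort (fun x y : R => y <= x) s))) [RHS](big_nth 0).
by rewrite big_mkord size_sort_desc.
Qed.

Lemma nth_sort_desc_const (T : Type) (t : seq T) (c : R) (i : nat) :
  (i < size t)%N -> nth 0 (sort_desc [seq c | _ <- t]) i = c.
Proof.
move=> lt_it; apply/eqP.
have /allP const_t : all (pred1 c) [seq c | _ <- t].
  by elim: t {lt_it} => //= _ t ->; rewrite eqxx.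
apply: const_t; rewrite -(mem_sort (fun x y : R => y <= x)).
by rewrite mem_nth // size_sort size_map.
Qed.

Lemma weighted_sum_sort_desc_le (M : nat) (r : 'I_M -> R) (w : nat -> R) :
  {homo w : i j / (i <= j)%N >-> i <= j} ->
  M%:R * \sum_(i < M) nth 0 (sort_desc [seq r i | i <- enum 'I_M]) i * w i
  <= (\sum_i r i) * \sum_(i < M) w i.
Proof.
move=> w_nondecr; set s := sort_desc _.
have size_r : size [seq r i | i <- enum 'I_M] = M by rewrite size_map size_enum_ord.
have sum_s : \sum_(i < M) nth 0 s i = \sum_i r i.
  by have := sum_sort_desc [seq r i | i <- enum 'I_M]; rewrite size_r big_map big_enum.
have s_nonincr (i j : 'I_M) : (i <= j)%N -> nth 0 s j <= nth 0 s i.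
  by move=> le_ij; apply: nth_sort_desc_nonincr; rewrite le_ij size_r /=.
rewrite -sum_s -{1}(card_ord M); apply: chebyshev_sum_le => i j.
have [le_ij | /ltnW le_ji] := leqP i j.
  by rewrite mulr_ge0_le0 // subr_cp0 ?w_nondecr ?s_nonincr.
by rewrite mulr_le0_ge0 // subr_cp0 ?w_nondecr ?s_nonincr.
Qed.

End DecreasingRearrangement.

Section DownloadCost.

Variables (R : realFieldType) (N K : nat).

Definition Dweight (i : nat) : R := (N%:R ^+ (K - 1 - i))^-1.

Lemma Dweight_nondecr : (0 < N)%N -> {homo Dweight : i j / (i <= j)%N >-> i <= j}.
Proof.
move=> N_gt0 i j le_ij.
rewrite /Dweight lef_pV2 ?posrE ?exprn_gt0 ?ltr0n //.
by apply: ler_weXn2l; [rewrite ler1n | exact: leq_sub2l].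
Qed.

Lemma DstarE (M : nat) (r : 'I_M -> R) :
  let s := sort_desc [seq r i | i <- enum 'I_M] in
  Dstar N K r = \sum_(j < K - M) (N%:R ^+ j)^-1
                + \sum_(i < M) Dweight i - \sum_(i < M) nth 0 s i * Dweight i.
Proof.
rewrite /Dstar -addrA -sumrB; congr (_ + _).
by apply: eq_bigr => i _; rewrite /Dweight mulrBl mul1r.
Qed.

Lemma Dstar_const (M : nat) (c : R) :
  Dstar N K (fun _ : 'I_M => c) = \sum_(j < K - M) (N%:R ^+ j)^-1
                + \sum_(i < M) Dweight i - c * \sum_(i < M) Dweight i.
Proof.
rewrite DstarE mulr_sumr; congr (_ - _); apply: eq_bigr => i _.
by congr (_ * _); apply: nth_sort_desc_const; rewrite size_enum_ord.
Qed.

End DownloadCost.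

Theorem corollary1 (R : realFieldType) (N K M : nat) (S : R) (r : 'I_M -> R) :
  (0 < N)%N -> (M <= K)%N -> 0 <= S -> S <= M%:R ->
  (forall i, 0 <= r i <= 1) -> \sum_(i < M) r i = S ->
  Dstar N K (fun _ : 'I_M => S / M%:R) <= Dstar N K r.
Proof.
move=> N_gt0 _ _ _ _ sum_r.
rewrite Dstar_const DstarE lerD2l lerN2.
case: (posnP M) => [M0 | M_gt0]; first by subst M; rewrite !big_ord0 mulr0.
rewrite mulrAC ler_pdivlMr ?ltr0n // mulrC -sum_r.
exact/weighted_sum_sort_desc_le/Dweight_nondecr.
Qed.
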